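(* Let $(M_1,f_1,g_1)$ and $(M_2,f_2,g_2)$ be $(m,n)$-hypermodules over a commutative Krasner $(m,n)$-hyperring $(R,f',g')$ with scalar identity $1$, let $h:M_1\to M_2$ be an epimorphism, and let $\phi_1:\mathcal{SH}(M_1)\to\mathcal{SH}(M_1)\cup\{\varnothing\}$ and $\phi_2:\mathcal{SH}(M_2)\to\mathcal{SH}(M_2)\cup\{\varnothing\}$ be functions. Then: (1) if $Q_2$ is an $n$-ary $\phi_2$-classical prime subhypermodule of $M_2$ with $\phi_1(h^{-1}(Q_2))=h^{-1}(\phi_2(Q_2))$, then $h^{-1}(Q_2)$ is an $n$-ary $\phi_1$-classical prime subhypermodule of $M_1$; (2) if $Q_1$ is an $n$-ary $\phi_1$-classical prime subhypermodule of $M_1$ with $\mathrm{Ker}(h)\subseteq Q_1$ and $\phi_2(h(Q_1))=h(\phi_1(Q_1))$, then $h(Q_1)$ is an $n$-ary $\phi_2$-classical prime subhypermodule of $M_2$.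
   Context: A commutative Krasner $(m,n)$-hyperring with scalar identity $1$ is a triple $(R,f',g')$ where $(R,f')$ is a canonical $m$-ary hypergroup with zero $0$, $(R,g')$ is a commutative $n$-ary semigroup, $g'$ is distributive over $f'$, $0$ is a zero element for $g'$, and $g'(x,1^{(n-1)})=x$. Notation: $x_i^j$ denotes $x_i,\dots,x_j$ and $x^{(k)}$ denotes $x$ repeated $k$ times. An $(m,n)$-hypermodule over $R$ is a triple $(M,f,g)$ with $(M,f)$ a canonical $m$-ary hypergroup with zero $0$ and $g:R^{n-1}\times M\to P^*(M)$ satisfying: $g(r_1^{n-1},f(x_1^m))=f(g(r_1^{n-1},x_1),\dots,g(r_1^{n-1},x_m))$; $g(r_1^{i-1},f'(s_1^m),r_{i+1}^{n-1},x)=f(g(r_1^{i-1},s_1,r_{i+1}^{n-1},x),\dots,g(r_1^{i-1},s_m,r_{i+1}^{n-1},x))$; $g(r_1^{i-1},g'(r_i^{i+n-1}),r_{i+n}^{2n-2},x)=g(r_1^{n-1},g(r_n^{2n-2},x))$; $g(r_1^{i-1},0,r_{i+1}^{n-1},x)=\{0\}$; moreover $g(1^{(n-1)},a)=\{a\}$. A subhypermodule is a nonempty $N\subseteq M$ with $(N,f)$ an $m$-ary subhypergroup and $g(R^{(n-1)},N)\subseteq N$; $\mathcal{SH}(M)$ is the set of subhypermodules of $M$. Given $\phi:\mathcal{SH}(M)\to\mathcal{SH}(M)\cup\{\varnothing\}$, a proper subhypermodule $Q$ of $M$ is $n$-ary $\phi$-classical prime if $g(r_1^{n-1},a)\subseteq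 Q\setminus\phi(Q)$ ($r_i\in R$, $a\in M$) implies $g(r_i,1^{(n-2)},a)\subseteq Q$ for some $1\le i\le n-1$. A homomorphism $h:M_1\to M_2$ satisfies $h(f_1(a_1^m))=f_2(h(a_1),\dots,h(a_m))$ and $h(g_1(r_1^{n-1},a))=g_2(r_1^{n-1},h(a))$; an epimorphism is a surjective homomorphism; $\mathrm{Ker}(h)=\{a\in M_1:h(a)=0\}$. *)

From mathcomp Require Import all_boot.
From Stdlib Require Import Permutation.
From Stdlib Require List.

Set Implicit Arguments.
Unset Strict Implicit.
Unset Printing Implicit Defensive.

(* An m-ary hyperoperation on T is a map  seq T -> T -> Prop :
   [f xs y] means  y \in f(xs); it is only meaningful (and all axioms are only
   required) on argument lists of size m.  Similarly an n-ary operation is a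
   map seq T -> T, and the scalar action of an (m,n)-hypermodule is
   g : seq R -> M -> M -> Prop, [g rs a y] meaning y \in g(r_1^{n-1}, a). *)

Definition set_eq {T : Type} (A B : T -> Prop) : Prop := forall x, A x <-> B x.
Definition sub_set {T : Type} (A B : T -> Prop) : Prop := forall x, A x -> B x.
Definition sing {T : Type} (x : T) : T -> Prop := fun y => y = x.

Definition hext {T : Type} (f : seq T -> T -> Prop) (As : seq (T -> Prop)) : T -> Prop :=
  fun y => exists xs, List.Forall2 (fun x (A : T -> Prop) => A x) xs As /\ f xs y.

Definition ins {T : Type} (i : nat) (x : T) (s : seq T) : seq T :=
  take i s ++ x :: drop i s.

Definition himage {A B : Type} (h : A -> B) (P : A -> Prop) : B -> Prop :=
  fun y => exists x, P x /\ h x = y.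
Definition hpreimage {A B : Type} (h : A -> B) (P : B -> Prop) : A -> Prop :=
  fun x => P (h x).

Record canonical_hypergroup (T : Type) (m : nat) (f : seq T -> T -> Prop) (z : T) : Prop := {
  ch_nonempty : forall xs, size xs = m -> exists y, f xs y;
  ch_assoc : forall xs, size xs = (2 * m - 1)%N -> forall i j, i < m -> j < m ->
    set_eq (hext f (map sing (take i xs) ++ f (take m (drop i xs)) :: map sing (drop (i + m) xs)))
           (hext f (map sing (take j xs) ++ f (take m (drop j xs)) :: map sing (drop (j + m) xs)));
  ch_repro : forall xs, size xs = m.-1 -> forall i, i < m -> forall x, exists w, f (ins i w xs) x;
  ch_comm : forall xs ys, size xs = m -> Permutation xs ys -> set_eq (f xs) (f ys);
  ch_zero : forall x, set_eq (f (x :: nseq m.-1 z)) (sing x);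
  ch_zero_unique : forall e, (forall x, set_eq (f (x :: nseq m.-1 e)) (sing x)) -> e = z;
  ch_inv : forall x, exists! y, f (x :: y :: nseq (m - 2) z) z;
  ch_rev : forall xs x i ys, size xs = m -> i < m -> f xs x ->
    List.Forall2 (fun a b => f (a :: b :: nseq (m - 2) z) z) (take i xs ++ drop i.+1 xs) ys ->
    f (x :: ys) (nth x xs i)
}.

Record krasner_hyperring (R : Type) (m n : nat) (fR : seq R -> R -> Prop) (gR : seq R -> R)
    (z one : R) : Prop := {
  kr_canonical : canonical_hypergroup m fR z;
  kr_assoc : forall xs, size xs = (2 * n - 1)%N -> forall i j, i < n -> j < n ->
    gR (take i xs ++ gR (take n (drop i xs)) :: drop (i + n) xs) =
    gR (take j xs ++ gR (take n (drop j xs)) :: drop (j + n) xs);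
  kr_comm : forall xs ys, size xs = n -> Permutation xs ys -> gR xs = gR ys;
  kr_distr : forall xs as_ i, size xs = n.-1 -> size as_ = m -> i < n ->
    set_eq (fun y => exists a, fR as_ a /\ y = gR (ins i a xs))
           (fR (map (fun a => gR (ins i a xs)) as_));
  kr_zero : forall xs i, size xs = n.-1 -> i < n -> gR (ins i z xs) = z;
  kr_one : forall x, gR (x :: nseq n.-1 one) = x
}.

Record hypermodule (R M : Type) (m n : nat) (fR : seq R -> R -> Prop) (gR : seq R -> R)
    (zR one : R) (f : seq M -> M -> Prop) (g : seq R -> M -> M -> Prop) (z : M) : Prop := {
  hm_canonical : canonical_hypergroup m f z;
  hm_nonempty : forall rs x, size rs = n.-1 -> exists y, g rs x y;
  hm_ax1 : forall rs xs, size rs = n.-1 -> size xs = m ->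
    set_eq (fun y => exists x, f xs x /\ g rs x y) (hext f (map (g rs) xs));
  hm_ax2 : forall rs ss i x, size rs = (n - 2)%N -> i <= n - 2 -> size ss = m ->
    set_eq (fun y => exists s, fR ss s /\ g (ins i s rs) x y)
           (hext f (map (fun s => g (ins i s rs) x) ss));
  hm_ax3 : forall rs i x, size rs = (2 * n - 2)%N -> i < n.-1 ->
    set_eq (g (take i rs ++ gR (take n (drop i rs)) :: drop (i + n) rs) x)
           (fun y => exists w, g (drop n.-1 rs) x w /\ g (take n.-1 rs) w y);
  hm_ax4 : forall rs i x, size rs = (n - 2)%N -> i <= n - 2 ->
    set_eq (g (ins i zR rs) x) (sing z);
  hm_one : forall a, set_eq (g (nseq n.-1 one) a) (sing a)
}.

Definition subhypergroup (M : Type) (m : nat) (f : seq M -> M -> Prop) (N : M -> Prop) : Prop :=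
  (exists x, N x) /\
  (forall xs y, size xs = m -> List.Forall N xs -> f xs y -> N y) /\
  (forall xs i x, size xs = m.-1 -> List.Forall N xs -> i < m -> N x ->
     exists w, N w /\ f (ins i w xs) x).

Definition subhypermodule (R M : Type) (m n : nat) (f : seq M -> M -> Prop)
    (g : seq R -> M -> M -> Prop) (N : M -> Prop) : Prop :=
  subhypergroup m f N /\
  (forall rs x y, size rs = n.-1 -> N x -> g rs x y -> N y).

Definition phi_function (R M : Type) (m n : nat) (f : seq M -> M -> Prop)
    (g : seq R -> M -> M -> Prop) (phi : (M -> Prop) -> (M -> Prop)) : Prop :=
  forall N, subhypermodule m n f g N ->
    subhypermodule m n f g (phi N) \/ (forall x, ~ phi N x).

Definition phi_classical_prime (R M : Type) (m n : nat) (one : R) (f : seq M -> M -> Prop)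
    (g : seq R -> M -> M -> Prop) (phi : (M -> Prop) -> (M -> Prop)) (Q : M -> Prop) : Prop :=
  subhypermodule m n f g Q /\ (exists a, ~ Q a) /\
  (forall rs a, size rs = n.-1 ->
     (forall x, g rs a x -> Q x /\ ~ phi Q x) ->
     exists i, i < n.-1 /\ (forall x, g (nth one rs i :: nseq (n - 2) one) a x -> Q x)).

Definition hyp_homomorphism (R M1 M2 : Type) (m n : nat)
    (f1 : seq M1 -> M1 -> Prop) (g1 : seq R -> M1 -> M1 -> Prop)
    (f2 : seq M2 -> M2 -> Prop) (g2 : seq R -> M2 -> M2 -> Prop) (h : M1 -> M2) : Prop :=
  (forall xs, size xs = m -> set_eq (himage h (f1 xs)) (f2 (map h xs))) /\
  (forall rs a, size rs = n.-1 -> set_eq (himage h (g1 rs a)) (g2 rs (h a))).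

Definition hyp_epimorphism (R M1 M2 : Type) (m n : nat)
    (f1 : seq M1 -> M1 -> Prop) (g1 : seq R -> M1 -> M1 -> Prop)
    (f2 : seq M2 -> M2 -> Prop) (g2 : seq R -> M2 -> M2 -> Prop) (h : M1 -> M2) : Prop :=
  hyp_homomorphism m n f1 g1 f2 g2 h /\ (forall y, exists x, h x = y).

Definition ker {M1 M2 : Type} (h : M1 -> M2) (z2 : M2) : M1 -> Prop := fun x => h x = z2.

(* Preimages and images of subhypermodules under a homomorphism are again
   subhypermodules; the only non-formal point is that the preimage satisfies
   the reproduction axiom, which follows from reversibility in M2 because a
   subhypermodule contains the negatives of its elements. The classical prime
   condition transfers along h because h commutes with the scalar action, and
   h(Q1) stays proper because Q1 contains Ker(h) and is therefore saturated
   (h a = h q with q in Q1 forces a in Q1). *)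
From mathcomp Require Import all_boot zify.
From Stdlib Require List.

Set Implicit Arguments.
Unset Strict Implicit.
Unset Printing Implicit Defensive.

Lemma ins0 T (w : T) s : ins 0 w s = w :: s.
Proof. by rewrite /ins take0 drop0. Qed.

Lemma size_ins T i (w : T) s : size (ins i w s) = (size s).+1.
Proof. by rewrite /ins size_cat /= addnS -size_cat cat_take_drop. Qed.

Lemma map_ins A B (h : A -> B) i w s : map h (ins i w s) = ins i (h w) (map h s).
Proof. by rewrite /ins map_cat /= map_take map_drop. Qed.

Lemma nth_ins T x0 i (w : T) s : i <= size s -> nth x0 (ins i w s) i = w.
Proof. by move=> le_is; rewrite /ins nth_cat size_take_min (minn_idPl le_is) ltnn subnn. Qed.

Lemma cat_take_drop_ins T i (w : T) s :
  i <= size s -> take i (ins i w s) ++ drop i.+1 (ins i w s) = s.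
Proof.
move=> le_is; rewrite /ins take_cat drop_cat size_take_min (minn_idPl le_is) ltnn.
by rewrite ltnNge leqnSn subnn subSnn take0 cats0 /= drop0 cat_take_drop.
Qed.

Lemma nseq_predn T k (a : T) : 2 <= k -> nseq k.-1 a = a :: nseq (k - 2) a.
Proof. by move=> le2k; have -> : k.-1 = (k - 2).+1 by lia. Qed.

Lemma size_cons_nseq T k (r a : T) : 2 <= k -> size (r :: nseq (k - 2) a) = k.-1.
Proof. by rewrite /= size_nseq; lia. Qed.

Lemma Forall2_size A B (P : A -> B -> Prop) xs ys :
  List.Forall2 P xs ys -> size xs = size ys.
Proof. by elim=> //= ? ? ? ? _ _ ->. Qed.

Lemma Forall2_cons_r A B (P : A -> B -> Prop) xs y ys :
  List.Forall2 P xs (y :: ys) -> exists x xs', [/\ xs = x :: xs', P x y & List.Forall2 P xs' ys].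
Proof.
case: xs => [|x xs] H; first by have := Forall2_size H.
by case/List.Forall2_cons_iff: H => Pxy H; exists x, xs.
Qed.

Lemma Forall2_in_map_nseq A B (F : A -> B -> Prop) z k a xs :
  (forall x, F a x -> x = z) ->
  List.Forall2 (fun x (S : B -> Prop) => S x) xs (map F (nseq k a)) -> xs = nseq k z.
Proof.
move=> Fa_z; elim: k xs => [|k IH] xs /= H; first by case: xs H => // x xs /Forall2_size.
by have [x [xs' [-> /Fa_z -> /IH ->]]] := Forall2_cons_r H.
Qed.

Lemma Forall_nseq A (P : A -> Prop) k a : P a -> List.Forall P (nseq k a).
Proof. by move=> Pa; elim: k => //= k IH; constructor. Qed.

Lemma Forall_map_preimage A B (h : A -> B) (Q : B -> Prop) xs :
  List.Forall (hpreimage h Q) xs -> List.Forall Q (map h xs).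
Proof. by elim=> //= *; constructor. Qed.

Lemma Forall_himage A B (h : A -> B) (Q : A -> Prop) ys :
  List.Forall (himage h Q) ys -> exists2 xs, ys = map h xs & List.Forall Q xs.
Proof.
elim=> [|y l [x [Qx <-]] _ [xs -> Qxs]]; first by exists [::].
by exists (x :: xs) => //; constructor.
Qed.

Section Hypermodule.

Variables (R M : Type) (m n : nat) (fR : seq R -> R -> Prop) (gR : seq R -> R) (zR one : R).
Variables (f : seq M -> M -> Prop) (g : seq R -> M -> M -> Prop) (z : M).
Hypotheses (le2m : 2 <= m) (le2n : 2 <= n).
Hypothesis ringR : krasner_hyperring m n fR gR zR one.
Hypothesis modM : hypermodule m n fR gR zR one f g z.

Lemma act_zero_scalar x y : g (zR :: nseq (n - 2) one) x y <-> y = z.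
Proof.
have := hm_ax4 modM (rs := nseq (n - 2) one) (i := 0) x.
by rewrite size_nseq ins0 => /(_ erefl (leq0n _) y).
Qed.

Lemma subhypermodule_zero N : subhypermodule m n f g N -> N z.
Proof.
move=> [[[x Nx] _] closed_g].
by apply: closed_g Nx (proj2 (act_zero_scalar x z) erefl); exact: size_cons_nseq.
Qed.

(* The negative of b is obtained by acting on b with the negative of [one]. *)
Lemma subhypermodule_opp N b :
  subhypermodule m n f g N -> N b -> exists2 c, N c & f [:: b, c & nseq (m - 2) z] z.
Proof.
move=> [_ closed_g] Nb.
have [r [r_opp _]] := ch_inv (kr_canonical ringR) one.
have := hm_ax2 modM (rs := nseq (n - 2) one) (ss := [:: one, r & nseq (m - 2) zR]) (i := 0) b.
rewrite size_nseq /= size_nseq !ins0 => /(_ erefl (leq0n _) ltac:(lia) z) [+ _].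
case=> [|xs [args fxs]]; first by exists zR; split; last by rewrite ins0; apply/act_zero_scalar.
have [x1 [xs1 [exs gx1 args1]]] := Forall2_cons_r args.
have [c [ys [eys gc zs]]] := Forall2_cons_r args1.
move: gx1; rewrite -nseq_predn // => /(hm_one modM) ex1.
have ezs : ys = nseq (m - 2) z.
  by apply: Forall2_in_map_nseq zs => x; rewrite ins0 => /act_zero_scalar.
rewrite {}exs {}eys {}ex1 {}ezs in fxs.
by exists c => //; apply: closed_g gc; [exact: size_cons_nseq|].
Qed.

Lemma subhypermodule_opp_seq N xs :
  subhypermodule m n f g N -> List.Forall N xs ->
  exists2 ys, List.Forall2 (fun a b => f [:: a, b & nseq (m - 2) z] z) xs ys
            & List.Forall N ys.
Proof.
move=> subN; elim=> [|b l Nb _ [ys opp_ys Nys]]; first by exists [::].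
have [c Nc opp_c] := subhypermodule_opp subN Nb.
by exists (c :: ys); constructor.
Qed.

(* Reversibility moves w to the output side, where it becomes a hyperproduct
   of x and the negatives of xs. *)
Lemma subhypermodule_ins_closed N xs i w x :
  subhypermodule m n f g N -> size xs = m.-1 -> i < m ->
  List.Forall N xs -> N x -> f (ins i w xs) x -> N w.
Proof.
move=> subN size_xs lt_im Nxs Nx fw.
have [ys opp_ys Nys] := subhypermodule_opp_seq subN Nxs.
have le_i : i <= size xs by rewrite size_xs; lia.
have : f (x :: ys) (nth x (ins i w xs) i).
  apply: (ch_rev (hm_canonical modM) _ lt_im fw); first by rewrite size_ins size_xs; lia.
  by rewrite cat_take_drop_ins.
rewrite nth_ins //; case: subN => [[_ [closed_f _]] _]; apply: closed_f; last by constructor.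
by rewrite /= -(Forall2_size opp_ys) size_xs; lia.
Qed.

End Hypermodule.

Section Homomorphism.

Variables (R M1 M2 : Type) (m n : nat) (fR : seq R -> R -> Prop) (gR : seq R -> R) (zR one : R).
Variables (f1 : seq M1 -> M1 -> Prop) (g1 : seq R -> M1 -> M1 -> Prop) (z1 : M1).
Variables (f2 : seq M2 -> M2 -> Prop) (g2 : seq R -> M2 -> M2 -> Prop) (z2 : M2).
Variable h : M1 -> M2.
Hypotheses (le2m : 2 <= m) (le2n : 2 <= n).
Hypothesis ringR : krasner_hyperring m n fR gR zR one.
Hypothesis modM1 : hypermodule m n fR gR zR one f1 g1 z1.
Hypothesis modM2 : hypermodule m n fR gR zR one f2 g2 z2.
Hypothesis homh : hyp_homomorphism m n f1 g1 f2 g2 h.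

Lemma hom_hop xs y : size xs = m -> f1 xs y -> f2 (map h xs) (h y).
Proof. by move=> size_xs fy; apply: (proj1 (proj1 homh xs size_xs (h y))); exists y. Qed.

Lemma hom_hop_image xs y : size xs = m -> f2 (map h xs) y -> himage h (f1 xs) y.
Proof. by move=> size_xs; apply: (proj2 (proj1 homh xs size_xs y)). Qed.

Lemma hom_act rs a y : size rs = n.-1 -> g1 rs a y -> g2 rs (h a) (h y).
Proof. by move=> size_rs gy; apply: (proj1 (proj2 homh rs a size_rs (h y))); exists y. Qed.

Lemma hom_act_image rs a y : size rs = n.-1 -> g2 rs (h a) y -> himage h (g1 rs a) y.
Proof. by move=> size_rs; apply: (proj2 (proj2 homh rs a size_rs y)). Qed.

Lemma hom_zero : h z1 = z2.
Proof.
have := hom_act (size_cons_nseq zR one le2n) (proj2 (act_zero_scalar modM1 z1 z1) erefl).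
by move/(act_zero_scalar modM2).
Qed.

Lemma preimage_subhypermodule N :
  subhypermodule m n f2 g2 N -> subhypermodule m n f1 g1 (hpreimage h N).
Proof.
move=> subN; have [[_ [closed_f _]] closed_g] := subN.
split; [split; [|split] |].
- by exists z1; rewrite /hpreimage hom_zero; exact: (subhypermodule_zero le2n modM2 subN).
- move=> xs y size_xs Nxs /(hom_hop size_xs).
  by apply: closed_f (Forall_map_preimage Nxs); rewrite size_map.
- move=> xs i x size_xs Nxs lt_im Nx.
  have [w fw] := ch_repro (hm_canonical modM1) size_xs lt_im x.
  exists w; split => //.
  have size_ins_xs : size (ins i w xs) = m by rewrite size_ins size_xs; lia.
  have := hom_hop size_ins_xs fw; rewrite map_ins.
  apply: (subhypermodule_ins_closed le2m le2n ringR modM2 subN) lt_im _ Nx.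
  + by rewrite size_map.
  + exact: Forall_map_preimage.
- by move=> rs x y size_rs Nx /(hom_act size_rs); apply: closed_g.
Qed.

Lemma image_subhypermodule N :
  subhypermodule m n f1 g1 N -> subhypermodule m n f2 g2 (himage h N).
Proof.
move=> [[[x0 Nx0] [closed_f repro]] closed_g].
split; [split; [|split] |].
- by exists (h x0), x0.
- move=> ys y size_ys /Forall_himage [xs eys Nxs]; subst ys; rewrite size_map in size_ys.
  move=> /(hom_hop_image size_ys) [x [fx <-]].
  by exists x; split => //; apply: closed_f fx.
- move=> ys i _ size_ys /Forall_himage [xs eys Nxs] lt_im [x [Nx <-]].
  subst ys; rewrite size_map in size_ys.
  have [w [Nw fw]] := repro xs i x size_ys Nxs lt_im Nx.
  exists (h w); split; first by exists w.
  by rewrite -map_ins; apply: hom_hop fw; rewrite size_ins size_ys; lia.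
- move=> rs _ y size_rs [x [Nx <-]] /(hom_act_image size_rs) [x' [gx' <-]].
  by exists x'; split => //; apply: closed_g gx'.
Qed.

(* With c a negative of q in N, some hypersum d of a and c lies in Ker(h), and
   a is recovered from d and c by reversibility. *)
Lemma subhypermodule_ker_saturated N q a :
  subhypermodule m n f1 g1 N -> sub_set (ker h z2) N -> N q -> h a = h q -> N a.
Proof.
move=> subN kerN Nq eq_a.
have [c Nc fqc] := subhypermodule_opp le2m le2n ringR modM1 subN Nq.
have size2 u v : size [:: u, v & nseq (m - 2) z1] = m by rewrite /= size_nseq; lia.
have fhac : f2 (map h [:: a, c & nseq (m - 2) z1]) z2.
  by have := hom_hop (size2 q c) fqc; rewrite /= map_nseq hom_zero eq_a.
have [d [fd /kerN Nd]] := hom_hop_image (size2 a c) fhac.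
rewrite -ins0 in fd.
apply: (subhypermodule_ins_closed le2m le2n ringR modM1 subN _ _ _ Nd fd).
- exact: size_cons_nseq.
- exact: leq_trans le2m.
- by constructor => //; apply/Forall_nseq/(subhypermodule_zero le2n modM1 subN).
Qed.

Section ClassicalPrime.

Variables (phi1 : (M1 -> Prop) -> (M1 -> Prop)) (phi2 : (M2 -> Prop) -> (M2 -> Prop)).
Hypothesis surj_h : forall y, exists x, h x = y.

Lemma phi_classical_prime_preimage Q :
  phi_classical_prime m n one f2 g2 phi2 Q ->
  set_eq (phi1 (hpreimage h Q)) (hpreimage h (phi2 Q)) ->
  phi_classical_prime m n one f1 g1 phi1 (hpreimage h Q).
Proof.
move=> [subQ [[b Qb] primeQ]] phiE.
split; first exact: preimage_subhypermodule.
split; first by have [a ea] := surj_h b; exists a; rewrite /hpreimage ea.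
move=> rs a size_rs sub_rsa.
have [|i [lt_i sub_i]] := primeQ rs (h a) size_rs.
  move=> y /(hom_act_image size_rs) [x [gx <-]].
  by have [Qx phix] := sub_rsa x gx; split => // phiy; apply/phix/phiE.
exists i; split => // x /(hom_act (size_cons_nseq _ one le2n)).
exact: sub_i.
Qed.

Lemma phi_classical_prime_image Q :
  phi_classical_prime m n one f1 g1 phi1 Q -> sub_set (ker h z2) Q ->
  set_eq (phi2 (himage h Q)) (himage h (phi1 Q)) ->
  phi_classical_prime m n one f2 g2 phi2 (himage h Q).
Proof.
move=> [subQ [[b Qb] primeQ]] kerQ phiE.
have saturated := subhypermodule_ker_saturated subQ kerQ.
split; first exact: image_subhypermodule.
split; first by exists (h b) => -[q [Qq /esym/(saturated _ _ Qq)]].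
move=> rs y size_rs sub_rsy; have [a ea] := surj_h y; subst y.
have [|i [lt_i sub_i]] := primeQ rs a size_rs.
  move=> x gx; have [[q [Qq eq_x]] phix] := sub_rsy _ (hom_act size_rs gx).
  split; first exact: saturated Qq (esym eq_x).
  by move=> phi1x; apply/phix/phiE; exists x.
exists i; split => // y /(hom_act_image (size_cons_nseq _ one le2n)) [x [gx <-]].
by exists x; split => //; apply: sub_i.
Qed.

End ClassicalPrime.

End Homomorphism.

Theorem mainTheorem13 (R M1 M2 : Type) (m n : nat)
  (fR : seq R -> R -> Prop) (gR : seq R -> R) (zR one : R)
  (f1 : seq M1 -> M1 -> Prop) (g1 : seq R -> M1 -> M1 -> Prop) (z1 : M1)
  (f2 : seq M2 -> M2 -> Prop) (g2 : seq R -> M2 -> M2 -> Prop) (z2 : M2)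
  (h : M1 -> M2)
  (phi1 : (M1 -> Prop) -> (M1 -> Prop)) (phi2 : (M2 -> Prop) -> (M2 -> Prop)) :
  2 <= m -> 2 <= n ->
  krasner_hyperring m n fR gR zR one ->
  hypermodule m n fR gR zR one f1 g1 z1 ->
  hypermodule m n fR gR zR one f2 g2 z2 ->
  hyp_epimorphism m n f1 g1 f2 g2 h ->
  phi_function m n f1 g1 phi1 ->
  phi_function m n f2 g2 phi2 ->
  (forall Q2 : M2 -> Prop,
     phi_classical_prime m n one f2 g2 phi2 Q2 ->
     set_eq (phi1 (hpreimage h Q2)) (hpreimage h (phi2 Q2)) ->
     phi_classical_prime m n one f1 g1 phi1 (hpreimage h Q2)) /\
  (forall Q1 : M1 -> Prop,
     phi_classical_prime m n one f1 g1 phi1 Q1 ->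
     sub_set (ker h z2) Q1 ->
     set_eq (phi2 (himage h Q1)) (himage h (phi1 Q1)) ->
     phi_classical_prime m n one f2 g2 phi2 (himage h Q1)).
Proof.
move=> le2m le2n ringR modM1 modM2 [homh surj_h] _ _; split.
- exact: (phi_classical_prime_preimage le2m le2n ringR modM1 modM2 homh surj_h).
- exact: (phi_classical_prime_image le2m le2n ringR modM1 modM2 homh surj_h).
Qed.
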